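(* Assume there are constants $\gamma_t\ge 0$ ($t=0,\dots,T-1$) with $|C_t(x)-C_t(y)|\le\gamma_t|x-y|$ for all $x,y$. Then for every $t=0,1,\dots,T-1$ and all $x'\le x$: $H_t(x)-H_t(x')\le\psi_t(x-x',x)$ and $V_t(x)-V_t(x')\le\varphi_t(x-x',x)$.
   Context: Model. Fix an integer horizon $T\ge 2$, a discount factor $\alpha\in(0,1]$, and for $t=0,\dots,T-1$: unit ordering costs $c_t\in\mathbb R$, a salvage coefficient $c_T\in\mathbb R$, setup costs $K_t\ge 0$, functions $G_t:\mathbb R\to\mathbb R$, and independent nonnegative random demands $D_0,\dots,D_{T-1}$ with right-continuous distribution functions $F_t$ and finite means; all expectations appearing are assumed finite. Put $C_t(y)=(c_t-\alpha c_{t+1})y+G_t(y)+\alpha c_{t+1}E[D_t]$. Standing assumptions: (i) each $C_t$ is convex with $C_t(y)\to+\infty$ as $|y|\to\infty$; (ii) $K_t\ge \alpha K_{t+1}$ for $t=0,\dots,T-2$. Grid construction. Fix $\theta>0$, $z_m=m\theta$, $Z_\theta=\{z_m:m\in\mathbb Z\}$, $f_t(n)=F_t(z_{n+1})-F_t(z_n)$ ($n\ge -1$). $C^m_t=\min\{y: C_t(y)=\min_x C_t(x)\}$; with $z_{n_0}<C^m_t\le z_{n_0+1}$, $S^U_t=\min\{z_m\in Z_\theta: z_m\ge C^m_t,\ C_t(z_m)>C_t(z_{n_0})+K_t\}$. $s_{T-1}$ is a point with $s_{T-1}\le C^m_{T-1}$, $C_{T-1}(s_{T-1})=C_{T-1}(C^m_{T-1})+K_{T-1}$;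 $\bar I_{T-1}=s_{T-1}$. For $t=T-2,\dots,0$: $I_t=\max\{z_m\in Z_\theta: z_m<\min(\bar I_{t+1}-\theta,C^m_t)\}$, $\bar I_t=\max\{z_m\in Z_\theta: z_m\le I_t,\ C_t(z_m)>C_t(I_t)+K_t\}+\theta$. $H_{T-1}=C_{T-1}$, $S_{T-1}=C^m_{T-1}$; $V_t(y)=H_t(S_t)+K_t$ for $y<s_t$, $V_t(y)=H_t(y)$ for $y\ge s_t$. For $t=T-2,\dots,0$: $H_t(y)=C_t(y)+\alpha\sum_{n=-1}^\infty V_{t+1}(y-z_n)f_t(n)$; $S_t=\max\{z_m\in Z_\theta: I_t\le z_m\le S^U_t,\ H_t(z_m)=\min\{H_t(z_n):z_n\in Z_\theta, I_t\le z_n\le S^U_t\}\}$; $s_t=S_t$ if $K_t=0$, else $s_t=\min\{z_m\in Z_\theta:\bar I_t\le z_m\le S_t,\ H_t(z_m)\le H_t(S_t)+K_t\}$. Estimate functions. $\psi_{T-1}(x,y)=\gamma_{T-1}x$ for all $x,y$; $\varphi_{T-1}(x,y)=0$ if $y<s_{T-1}$ and $\varphi_{T-1}(x,y)=\gamma_{T-1}x$ if $y\ge s_{T-1}$. For $t=0,\dots,T-2$: $\psi_t(x,y)=\gamma_tx$ if $y<s_{t+1}-\theta$, and otherwise $\psi_t(x,y)=\gamma_tx+\alpha\sum_{m=-1}^{n-1}\varphi_{t+1}(x,y-z_m)f_t(m)$, where $n$ is the integer with $z_{n-1}\le y-s_{t+1}<z_n$; and $\varphi_t(x,y)=0$ if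 $y<s_t$, $\varphi_t(x,y)=\psi_t(y-s_t,y)$ if $y\ge s_t$ and $y-x<s_t$, $\varphi_t(x,y)=\psi_t(x,y)$ if $y\ge s_t$ and $y-x\ge s_t$. *)

From Stdlib Require Import Reals ZArith.
From Coquelicot Require Import Coquelicot.
Open Scope R_scope.

Definition zg (theta : R) (m : Z) : R := IZR m * theta.
Definition on_grid (theta x : R) : Prop := exists m : Z, x = zg theta m.

Definition is_max (P : R -> Prop) (x : R) : Prop := P x /\ forall y, P y -> y <= x.
Definition is_min (P : R -> Prop) (x : R) : Prop := P x /\ forall y, P y -> x <= y.

Definition convex_fun (f : R -> R) : Prop :=
  forall x y l, 0 <= l <= 1 -> f (l * x + (1 - l) * y) <= l * f x + (1 - l) * f y.

Definition coercive (f : R -> R) : Prop :=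
  forall M : R, exists R0 : R, forall y, R0 <= Rabs y -> M <= f y.

Definition nonneg_distribution_function (F : R -> R) : Prop :=
  (forall x y, x <= y -> F x <= F y) /\
  (forall x eps, 0 < eps -> exists delta, 0 < delta /\
      forall y, x <= y < x + delta -> Rabs (F y - F x) < eps) /\
  (forall x, x < 0 -> F x = 0) /\
  (forall eps, 0 < eps -> exists M, forall x, M <= x -> Rabs (F x - 1) < eps).

(* E[D] = \int_0^oo (1 - F) for a nonnegative r.v. D with d.f. F;
   this predicate says the mean is finite and equals m *)
Definition has_mean (F : R -> R) (m : R) : Prop :=
  is_RInt_gen (fun x => 1 - F x) (at_point 0) (Rbar_locally p_infty) m.

Definition Cfun (alpha : R) (c : nat -> R) (G : nat -> R -> R) (ED : nat -> R)
  (t : nat) (y : R) : R :=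
  (c t - alpha * c (S t)) * y + G t y + alpha * c (S t) * ED t.

Definition fgrid (theta : R) (F : nat -> R -> R) (t : nat) (n : Z) : R :=
  F t (zg theta (n + 1)) - F t (zg theta n).

Definition Vfun (H : nat -> R -> R) (Sb s K : nat -> R) (t : nat) (y : R) : R :=
  if Rlt_dec y (s t) then H t (Sb t) + K t else H t y.

(* the n-th term (n = k - 1, k : nat) of sum_{n=-1}^oo V_{t+1}(y - z_n) f_t(n) *)
Definition Hterm (theta : R) (F : nat -> R -> R) (H : nat -> R -> R) (Sb s K : nat -> R)
  (t : nat) (y : R) (k : nat) : R :=
  Vfun H Sb s K (S t) (y - zg theta (Z.of_nat k - 1)) * fgrid theta F t (Z.of_nat k - 1).

(* At t = T-1 the bounds are the Lipschitz estimate for C_{T-1}.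
   For t < T-1, H_t(x) - H_t(x') is the Lipschitz increment of C_t plus alpha times the
   expected increment of V_{t+1} over the grid demand; the induction hypothesis bounds each
   term by phi_{t+1}, and the terms with x - z_n < s_{t+1} vanish because V_{t+1} is constant
   below s_{t+1}, which truncates the series to the finite sum defining psi_t.  Finally
   V_t = H_t above s_t, while across s_t one uses H_t(s_t) <= H_t(S_t) + K_t. *)

From Stdlib Require Import Reals ZArith Lia Lra.
From Coquelicot Require Import Coquelicot.
Open Scope R_scope.

Lemma nat_backward_ind (T : nat) (P : nat -> Prop) :
  (0 < T)%nat -> P (T - 1)%nat -> (forall t, (S t < T)%nat -> P (S t) -> P t) ->
  forall t, (t < T)%nat -> P t.
Proof.
  intros HT Hlast Hstep.
  assert (Hd : forall d t, (T - 1 - t)%nat = d -> (t < T)%nat -> P t).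
  { induction d as [|d IHd]; intros t Hd Ht.
    - replace t with (T - 1)%nat by lia. exact Hlast.
    - apply Hstep; [lia|]. apply IHd; lia. }
  intros t Ht. exact (Hd _ t eq_refl Ht).
Qed.

Lemma Lipschitz_sub_le (f : R -> R) (g : R) :
  (forall x y, Rabs (f x - f y) <= g * Rabs (x - y)) ->
  forall x' x, x' <= x -> f x - f x' <= g * (x - x').
Proof.
  intros Hf x' x Hxx.
  pose proof (Hf x x') as Hl. rewrite (Rabs_right (x - x')) in Hl by lra.
  pose proof (Rle_abs (f x - f x')). lra.
Qed.

Lemma zg_le theta m n : 0 < theta -> (m <= n)%Z -> zg theta m <= zg theta n.
Proof.
  intros Htheta Hmn. unfold zg.
  apply Rmult_le_compat_r; [lra | now apply IZR_le].
Qed.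

Lemma fgrid_ge0 theta F t n :
  0 < theta -> nonneg_distribution_function (F t) -> 0 <= fgrid theta F t n.
Proof.
  intros Htheta [HFmono _]. unfold fgrid.
  assert (F t (zg theta n) <= F t (zg theta (n + 1))) by (apply HFmono, zg_le; [lra|lia]).
  lra.
Qed.

Lemma zg_bracket theta u : 0 < theta -> - theta <= u ->
  exists n, (0 <= n)%Z /\ zg theta (n - 1) <= u < zg theta n.
Proof.
  intros Htheta Hu.
  assert (Hr : u / theta * theta = u) by (field; lra).
  assert (Hr1 : -1 <= u / theta).
  { apply (Rmult_le_reg_r theta); [lra|]. lra. }
  destruct (archimed (u / theta)) as [Hup1 Hup2].
  assert (Hn : (-1 < up (u / theta))%Z) by (apply lt_IZR; simpl; lra).
  exists (up (u / theta)). unfold zg. rewrite minus_IZR. repeat split.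
  - lia.
  - rewrite <- Hr at 2. apply Rmult_le_compat_r; simpl; lra.
  - rewrite <- Hr at 1. apply Rmult_lt_compat_r; lra.
Qed.

Lemma Series_sub_le_sum (a b e : nat -> R) (N : nat) :
  ex_series a -> ex_series b ->
  (forall k, (N < k)%nat -> a k = b k) ->
  (forall k, (k <= N)%nat -> a k - b k <= e k) ->
  Series a - Series b <= sum_f_R0 e N.
Proof.
  intros Ha Hb Htail Hhead.
  rewrite (Series_incr_n a (S N)), (Series_incr_n b (S N)) by (auto; lia).
  rewrite (Series_ext (fun k => a (S N + k)%nat) (fun k => b (S N + k)%nat))
    by (intro k; apply Htail; lia).
  simpl pred.
  enough (sum_f_R0 a N - sum_f_R0 b N <= sum_f_R0 e N) by lra.
  rewrite <- minus_sum. now apply sum_Rle.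
Qed.

Section Expectation_step.

Variables (theta alpha gam sN : R) (C h V : R -> R) (f : Z -> R) (phiN psi : R -> R -> R).

Hypothesis Htheta : 0 < theta.
Hypothesis Halpha : 0 <= alpha.
Hypothesis Hf : forall n, 0 <= f n.
Hypothesis HC : forall x' x, x' <= x -> C x - C x' <= gam * (x - x').
Hypothesis HV_below : forall y y', y < sN -> y' < sN -> V y = V y'.
Hypothesis HV : forall x' x, x' <= x -> V x - V x' <= phiN (x - x') x.

Let term (y : R) (k : nat) : R := V (y - zg theta (Z.of_nat k - 1)) * f (Z.of_nat k - 1).

Hypothesis Hex : forall y, ex_series (term y).
Hypothesis Hh : forall y, h y = C y + alpha * Series (term y).
Hypothesis Hpsi_below : forall x y, y < sN - theta -> psi x y = gam * x.
Hypothesis Hpsi_above : forall x y, sN - theta <= y ->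
  forall n, zg theta (n - 1) <= y - sN < zg theta n ->
  psi x y = gam * x + alpha *
    sum_f_R0 (fun k => phiN x (y - zg theta (Z.of_nat k - 1)) * f (Z.of_nat k - 1))
      (Z.to_nat n).

Lemma term_sub_le x' x k : x' <= x ->
  term x k - term x' k <= phiN (x - x') (x - zg theta (Z.of_nat k - 1)) * f (Z.of_nat k - 1).
Proof.
  intros Hxx. unfold term. rewrite <- Rmult_minus_distr_r.
  apply Rmult_le_compat_r; [apply Hf|].
  replace (x - x') with ((x - zg theta (Z.of_nat k - 1)) - (x' - zg theta (Z.of_nat k - 1)))
    by ring.
  apply HV. lra.
Qed.

Lemma term_eq_below x' x k : x' <= x ->
  x - zg theta (Z.of_nat k - 1) < sN -> term x k = term x' k.
Proof. intros Hxx Hk. unfold term. rewrite (HV_below _ (x' - zg theta (Z.of_nat k - 1))); lra. Qed.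

Lemma h_sub_le_psi x' x : x' <= x -> h x - h x' <= psi (x - x') x.
Proof.
  intros Hxx. rewrite !Hh.
  pose proof (HC x' x Hxx) as HCx.
  assert (Hzk : forall k, zg theta (-1) <= zg theta (Z.of_nat k - 1))
    by (intro k; apply zg_le; [lra|lia]).
  assert (Hz1 : zg theta (-1) = - theta) by (unfold zg; simpl; ring).
  destruct (Rlt_dec x (sN - theta)) as [Hlo|Hhi].
  - rewrite (Hpsi_below _ _ Hlo).
    assert (Hser : Series (term x) - Series (term x') <= sum_f_R0 (fun _ => 0) 0).
    { apply Series_sub_le_sum; auto.
      - intros k _. apply term_eq_below; [lra|]. specialize (Hzk k). lra.
      - intros k _. rewrite (term_eq_below x' x k); [lra|lra|]. specialize (Hzk k). lra. }
    simpl in Hser. nra.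
  - apply Rnot_lt_le in Hhi.
    destruct (zg_bracket theta (x - sN) Htheta ltac:(lra)) as [n [Hn0 Hn]].
    rewrite (Hpsi_above _ _ Hhi n Hn).
    assert (Hser : Series (term x) - Series (term x') <=
      sum_f_R0 (fun k => phiN (x - x') (x - zg theta (Z.of_nat k - 1)) * f (Z.of_nat k - 1))
        (Z.to_nat n)).
    { apply Series_sub_le_sum; auto.
      - intros k Hk. apply term_eq_below; [lra|].
        assert (zg theta n <= zg theta (Z.of_nat k - 1)) by (apply zg_le; [lra|lia]). lra.
      - intros k _. now apply term_sub_le. }
    assert (alpha * (Series (term x) - Series (term x')) <=
      alpha * sum_f_R0 (fun k => phiN (x - x') (x - zg theta (Z.of_nat k - 1))
                                 * f (Z.of_nat k - 1)) (Z.to_nat n))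
      by (apply Rmult_le_compat_l; assumption).
    lra.
Qed.

End Expectation_step.

Definition phi_of_psi (s : R) (psi : R -> R -> R) (x y : R) : R :=
  if Rlt_dec y s then 0 else if Rlt_dec (y - x) s then psi (y - s) y else psi x y.

Lemma Vfun_below H Sb s K t y y' :
  y < s t -> y' < s t -> Vfun H Sb s K t y = Vfun H Sb s K t y'.
Proof. intros Hy Hy'. unfold Vfun. now destruct (Rlt_dec y (s t)), (Rlt_dec y' (s t)). Qed.

Lemma Vfun_sub_le H Sb s K t (psit : R -> R -> R) :
  H t (s t) <= H t (Sb t) + K t ->
  (forall x' x, x' <= x -> H t x - H t x' <= psit (x - x') x) ->
  forall x' x, x' <= x ->
  Vfun H Sb s K t x - Vfun H Sb s K t x' <= phi_of_psi (s t) psit (x - x') x.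
Proof.
  intros Hs Hpsi x' x Hxx. unfold Vfun, phi_of_psi.
  destruct (Rlt_dec x (s t)), (Rlt_dec x' (s t)), (Rlt_dec (x - (x - x')) (s t)); try lra.
  - pose proof (Hpsi (s t) x ltac:(lra)). lra.
  - now apply Hpsi.
Qed.

Lemma phi_of_psi_linear_le s g x y :
  0 <= g -> 0 <= x ->
  phi_of_psi s (fun x _ => g * x) x y <= if Rlt_dec y s then 0 else g * x.
Proof.
  intros Hg Hx. unfold phi_of_psi.
  destruct (Rlt_dec y s), (Rlt_dec (y - x) s); try lra.
  apply Rmult_le_compat_l; lra.
Qed.

Theorem lemma4p3
  (T : nat) (alpha theta : R) (c K : nat -> R) (G F : nat -> R -> R)
  (ED gamma : nat -> R)
  (Cm SU s Ib I Sb : nat -> R) (H : nat -> R -> R) (psi phi : nat -> R -> R -> R)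
  (* model *)
  (HT : (2 <= T)%nat)
  (Halpha : 0 < alpha <= 1)
  (HK : forall t, (t < T)%nat -> 0 <= K t)
  (HF : forall t, (t < T)%nat -> nonneg_distribution_function (F t))
  (HED : forall t, (t < T)%nat -> has_mean (F t) (ED t))
  (Hconv : forall t, (t < T)%nat -> convex_fun (Cfun alpha c G ED t))
  (Hcoer : forall t, (t < T)%nat -> coercive (Cfun alpha c G ED t))
  (HKdec : forall t, (S t < T)%nat -> alpha * K (S t) <= K t)
  (* grid construction *)
  (Htheta : 0 < theta)
  (HCm : forall t, (t < T)%nat ->
     is_min (fun y => forall x, Cfun alpha c G ED t y <= Cfun alpha c G ED t x) (Cm t))
  (HSU : forall t, (t < T)%nat -> forall n0 : Z,
     zg theta n0 < Cm t <= zg theta (n0 + 1) ->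
     is_min (fun x => on_grid theta x /\ Cm t <= x /\
               Cfun alpha c G ED t x > Cfun alpha c G ED t (zg theta n0) + K t) (SU t))
  (HsT : s (T - 1)%nat <= Cm (T - 1)%nat /\
         Cfun alpha c G ED (T - 1)%nat (s (T - 1)%nat)
           = Cfun alpha c G ED (T - 1)%nat (Cm (T - 1)%nat) + K (T - 1)%nat)
  (HIbT : Ib (T - 1)%nat = s (T - 1)%nat)
  (HI : forall t, (S t < T)%nat ->
     is_max (fun x => on_grid theta x /\ x < Rmin (Ib (S t) - theta) (Cm t)) (I t))
  (HIb : forall t, (S t < T)%nat ->
     is_max (fun x => on_grid theta x /\ x <= I t /\
               Cfun alpha c G ED t x > Cfun alpha c G ED t (I t) + K t) (Ib t - theta))
  (HHT : forall y, H (T - 1)%nat y = Cfun alpha c G ED (T - 1)%nat y)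
  (HSbT : Sb (T - 1)%nat = Cm (T - 1)%nat)
  (Hfin : forall t, (S t < T)%nat -> forall y,
     ex_series (fun k => Rabs (Hterm theta F H Sb s K t y k)))
  (HH : forall t, (S t < T)%nat -> forall y,
     H t y = Cfun alpha c G ED t y + alpha * Series (Hterm theta F H Sb s K t y))
  (HSb : forall t, (S t < T)%nat ->
     is_max (fun x => on_grid theta x /\ I t <= x <= SU t /\
               forall w, on_grid theta w -> I t <= w <= SU t -> H t x <= H t w) (Sb t))
  (Hs0 : forall t, (S t < T)%nat -> K t = 0 -> s t = Sb t)
  (Hs : forall t, (S t < T)%nat -> K t <> 0 ->
     is_min (fun x => on_grid theta x /\ Ib t <= x <= Sb t /\
               H t x <= H t (Sb t) + K t) (s t))
  (* Lipschitz constants *)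
  (Hgamma : forall t, (t < T)%nat -> 0 <= gamma t)
  (HLip : forall t, (t < T)%nat -> forall x y,
     Rabs (Cfun alpha c G ED t x - Cfun alpha c G ED t y) <= gamma t * Rabs (x - y))
  (* estimate functions *)
  (HpsiT : forall x y, psi (T - 1)%nat x y = gamma (T - 1)%nat * x)
  (HphiT : forall x y, phi (T - 1)%nat x y =
     if Rlt_dec y (s (T - 1)%nat) then 0 else gamma (T - 1)%nat * x)
  (Hpsi1 : forall t, (S t < T)%nat -> forall x y,
     y < s (S t) - theta -> psi t x y = gamma t * x)
  (Hpsi2 : forall t, (S t < T)%nat -> forall x y, s (S t) - theta <= y ->
     forall n : Z, zg theta (n - 1) <= y - s (S t) < zg theta n ->
     psi t x y = gamma t * x + alpha *
       sum_f_R0 (fun k => phi (S t) x (y - zg theta (Z.of_nat k - 1))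
                          * fgrid theta F t (Z.of_nat k - 1)) (Z.to_nat n))
  (Hphi : forall t, (S t < T)%nat -> forall x y,
     phi t x y = if Rlt_dec y (s t) then 0
                 else if Rlt_dec (y - x) (s t) then psi t (y - s t) y
                 else psi t x y) :
  forall t, (t < T)%nat -> forall x' x, x' <= x ->
    H t x - H t x' <= psi t (x - x') x /\
    Vfun H Sb s K t x - Vfun H Sb s K t x' <= phi t (x - x') x.
Proof.
  refine (nat_backward_ind T _ _ _ _); [lia | |].
  - assert (HH_lip : forall x' x, x' <= x ->
      H (T - 1)%nat x - H (T - 1)%nat x' <= gamma (T - 1)%nat * (x - x')).
    { intros x' x. rewrite !HHT. apply (Lipschitz_sub_le _ _ (HLip (T - 1)%nat ltac:(lia))). }
    assert (Hs_top : H (T - 1)%nat (s (T - 1)%nat) <= H (T - 1)%nat (Sb (T - 1)%nat) + K (T - 1)%nat)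
      by (rewrite !HHT, HSbT; lra).
    intros x' x Hxx. split.
    + rewrite HpsiT. now apply HH_lip.
    + rewrite HphiT.
      eapply Rle_trans; [apply (Vfun_sub_le H Sb s K _ (fun x _ => gamma (T - 1)%nat * x));
                         assumption |].
      apply phi_of_psi_linear_le; [apply Hgamma; lia | lra].
  - intros t Hst IH.
    assert (Ht : (t < T)%nat) by lia.
    assert (HH_psi : forall x' x, x' <= x -> H t x - H t x' <= psi t (x - x') x).
    { apply (h_sub_le_psi theta alpha (gamma t) (s (S t)) (Cfun alpha c G ED t) (H t)
               (Vfun H Sb s K (S t)) (fgrid theta F t) (phi (S t))); try lra.
      - intro n. now apply fgrid_ge0, HF.
      - apply Lipschitz_sub_le, HLip, Ht.
      - apply Vfun_below.
      - intros x' x Hxx. now apply IH.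
      - intro y. apply ex_series_Rabs, (Hfin t Hst).
      - apply HH, Hst.
      - apply Hpsi1, Hst.
      - apply Hpsi2, Hst. }
    assert (Hs_top : H t (s t) <= H t (Sb t) + K t).
    { destruct (Req_dec (K t) 0) as [HK0|HK0].
      - rewrite (Hs0 t Hst HK0). lra.
      - apply (Hs t Hst HK0). }
    intros x' x Hxx. split; [now apply HH_psi|].
    rewrite Hphi by assumption.
    now apply (Vfun_sub_le H Sb s K t (psi t)).
Qed.
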